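(* Let $(M,g)$ be a spacetime and let $\gamma$ be the worldline of an arbitrarily accelerated observer $\mathcal O$ (with arbitrarily rotating spatial triad). Let $e_a$ be the proper reference frame of $\mathcal O$, and take $e_a$ as the teleparallel frame. Then the gravitational energy-momentum density and the angular momentum density vanish along $\gamma$: $t^{\mu a}|_\gamma=0$ and $M^{ab}|_\gamma=0$.
   Context: Signature $(+,-,-,-)$. A tetrad $e_a=e_a{}^\mu\partial_\mu$ with coframe $\theta^a=e^a{}_\mu dx^\mu$ satisfies $g_{\mu\nu}=\eta_{ab}e^a{}_\mu e^b{}_\nu$; indices are converted with the tetrad and raised/lowered with $\eta_{ab}$ or $g_{\mu\nu}$; $e=\det(e^a{}_\mu)$. The proper reference frame of $\mathcal O$: along $\gamma$, $e_{(0)}$ is the observer's 4-velocity and $e_{(i)}$ its spatial triad; the frame is extended off $\gamma$ by parallel transport (Levi-Civita connection) along the spacelike geodesics orthogonal to $e_{(0)}$, i.e. it is the tetrad adapted to the observer's proper (Fermi-type) coordinates, so that along $\gamma$ the Levi-Civita spin connection is $\mathring\omega^a{}_{bc}|_\gamma=\delta^{(0)}_b\big(a^a\delta^{(0)}_c-a_c\delta^a_{(0)}+\omega^d\varepsilon_{(0)dec}\eta^{ea}\big)$ with $a^a$ the acceleration and $\omega^d$ the triad rotation. Taking $e_a$ as teleparallel frame means the torsion is $T^a{}_{\mu\nu}=\partial_\mu e^a{}_\nu-\partial_\nu e^a{}_\mu$. Define $T_a=T^b{}_{ba}$, $\Sigma^{\lambda\mu\nu}=\tfrac14\big(T^{\lambda\mu\nu}+T^{\mu\lambda\nu}-T^{\nu\lambda\mu}\big)+\tfrac12\big(g^{\lambda\nu}T^{\mu}-g^{\lambda\mu}T^{\nu}\big)$,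 $T=\Sigma^{abc}T_{abc}$, $t^{\mu a}=k\big(4\Sigma^{bc\mu}T_{bc}{}^{a}-e^{a\mu}T\big)$, and $M^{ab}=-4ke\big(\Sigma^{a0b}-\Sigma^{b0a}\big)$, with $k=1/(16\pi)$. *)

From HB Require Import structures.
From mathcomp Require Import all_boot all_order all_algebra.
From mathcomp Require Import all_classical all_reals all_analysis.
Set Implicit Arguments. Unset Strict Implicit. Unset Printing Implicit Defensive.
Import Order.TTheory GRing.Theory Num.Theory.
Import numFieldNormedType.Exports.
Local Open Scope ring_scope.

(* Local coordinates x = (x^0,x^1,x^2,x^3) : 'rV[R]_4 on a chart of spacetime.
   A tetrad field is E : 'rV_4 -> 'M_4 with  E x a mu = e^a_mu(x)
   (row = frame index a, column = coordinate index mu).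
   Frame and coordinate indices both range over 'I_4; index 0 = time.       *)

Section TEGR.
Variable R : realType.
Implicit Types (E : 'rV[R]_4 -> 'M[R]_4) (x : 'rV[R]_4).

Definition cb (mu : 'I_4) : 'rV[R]_4 := delta_mx 0 mu.

Definition pd (mu : 'I_4) (f : 'rV[R]_4 -> R) x : R := 'D_(cb mu) f x.

(* Minkowski metric, signature (+,-,-,-); eta^{ab} = eta_{ab} numerically *)
Definition eta (a b : 'I_4) : R :=
  if a == b then (if a == ord0 then 1 else -1) else 0.

(* inverse tetrad: einv E x mu a = e_a^mu(x) *)
Definition einv E x : 'M[R]_4 := invmx (E x).

Definition gmet E x (m n : 'I_4) : R :=
  \sum_(a < 4) \sum_(b < 4) eta a b * E x a m * E x b n.

Definition ginv E x (m n : 'I_4) : R :=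
  \sum_(a < 4) \sum_(b < 4) eta a b * einv E x m a * einv E x n b.

Definition Gam E x (m n l : 'I_4) : R :=
  2^-1 * \sum_(r < 4) ginv E x m r *
    (pd n (fun y => gmet E y r l) x + pd l (fun y => gmet E y r n) x
     - pd r (fun y => gmet E y n l) x).

Definition torsion E x (a m n : 'I_4) : R :=
  pd m (fun y => E y a n) x - pd n (fun y => E y a m) x.

Definition Tudd E x (l m n : 'I_4) : R :=
  \sum_(a < 4) einv E x l a * torsion E x a m n.

Definition Tuuu E x (l m n : 'I_4) : R :=
  \sum_(p < 4) \sum_(q < 4) ginv E x m p * ginv E x n q * Tudd E x l p q.

Definition Tddd E x (l m n : 'I_4) : R :=
  \sum_(p < 4) gmet E x l p * Tudd E x p m n.

Definition Tvd E x (n : 'I_4) : R := \sum_(l < 4) Tudd E x l l n.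
Definition Tvu E x (m : 'I_4) : R := \sum_(n < 4) ginv E x m n * Tvd E x n.

Definition Sigma E x (l m n : 'I_4) : R :=
  4^-1 * (Tuuu E x l m n + Tuuu E x m l n - Tuuu E x n l m)
  + 2^-1 * (ginv E x l n * Tvu E x m - ginv E x l m * Tvu E x n).

Definition Tscal E x : R :=
  \sum_(l < 4) \sum_(m < 4) \sum_(n < 4) Sigma E x l m n * Tddd E x l m n.

Definition kconst : R := (16 * pi)^-1.

Definition eup E x (a m : 'I_4) : R := \sum_(b < 4) eta a b * einv E x m b.

Definition Tddu_frame E x (l n a : 'I_4) : R :=
  \sum_(r < 4) \sum_(s < 4) Tddd E x l n r * ginv E x r s * E x a s.

Definition tdens E x (m a : 'I_4) : R :=
  kconst * (4 * (\sum_(l < 4) \sum_(n < 4) Sigma E x l n m * Tddu_frame E x l n a)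
            - eup E x a m * Tscal E x).

Definition Sigma_fcf E x (a m b : 'I_4) : R :=
  \sum_(l < 4) \sum_(n < 4) E x a l * E x b n * Sigma E x l m n.

Definition Mdens E x (a b : 'I_4) : R :=
  - 4 * kconst * \det (E x) * (Sigma_fcf E x a ord0 b - Sigma_fcf E x b ord0 a).

(* the observer's worldline in its proper coordinates: x = (tau,0,0,0) *)
Definition worldline (tau : R) : 'rV[R]_4 := tau *: cb ord0.

End TEGR.

(* Along the worldline the tetrad is the coordinate frame, so e^a_mu = delta^a_mu
   there and every time derivative of e^a_mu vanishes.  The geodesic equation for
   the spatial coordinate lines, polarized, kills Gamma^mu_{ij} for spatial i, j,
   and parallel transport along them gives d_i e^a_mu = Gamma^a_{i mu}.  Hence the
   only first derivatives of the frame left on the worldline are the acceleration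
   d_i e^0_0 and the antisymmetric triad rotation d_i e^j_0, which fixes the
   torsion there.  A direct computation in the Minkowski frame then shows that for
   such a torsion T = 0, Sigma^{bc mu} T_{bc}^a = 0 and Sigma^{a0b} is symmetric,
   so t^{mu a} and M^{ab} vanish. *)

From Pilot Require Import Defs.
From HB Require Import structures.
From mathcomp Require Import all_boot all_order all_algebra.
From mathcomp Require Import all_classical all_reals all_analysis.
From mathcomp Require Import ring lra.
Import Order.TTheory GRing.Theory Num.Theory.
Import numFieldNormedType.Exports.
Local Open Scope classical_set_scope.
Local Open Scope ring_scope.

Local Notation i1 := (@Ordinal 4 1 isT).
Local Notation i2 := (@Ordinal 4 2 isT).
Local Notation i3 := (@Ordinal 4 3 isT).

Lemma ord4P (i : 'I_4) : [\/ i = ord0, i = i1, i = i2 | i = i3].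
Proof.
by case: i => [[|[|[|[|//]]]] ?]; [constructor 1|constructor 2|constructor 3|constructor 4];
  apply: val_inj.
Qed.

Lemma big_ord4 (V : nmodType) (F : 'I_4 -> V) :
  \sum_(i < 4) F i = F ord0 + F i1 + F i2 + F i3.
Proof.
rewrite !big_ord_recr big_ord0 /= add0r.
by congr (_ + _ + _ + _); congr F; apply: val_inj.
Qed.

Section MatrixLimits.
Context {R : realType} {T : Type} (F : set_system T) {FF : Filter F}.

Lemma cvg_det n (M : T -> 'M[R]_n) (L : 'M[R]_n) :
  (forall i j, M t i j @[t --> F] --> L i j) -> \det (M t) @[t --> F] --> \det L.
Proof.
move=> ML; apply: (@cvg_big R _ +%R 0 xpredT) => [|s _]; first exact: add_continuous.
apply: cvgM; first exact: cvg_cst.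
by apply: (@cvg_big R _ *%R 1 xpredT) => [|i _]; [exact: mul_continuous | exact: ML].
Qed.

Lemma cvg_invmx n (M : T -> 'M[R]_n) (L : 'M[R]_n) :
  L \in unitmx -> (\forall t \near F, M t \in unitmx) ->
  (forall i j, M t i j @[t --> F] --> L i j) ->
  forall i j, invmx (M t) i j @[t --> F] --> invmx L i j.
Proof.
move=> Lunit Munit ML i j.
apply: (@cvg_trans _ ((\det (M t))^-1 * cofactor (M t) j i @[t --> F])).
  apply: near_eq_cvg; near=> t.
  by rewrite /invmx (near Munit t) // !mxE.
rewrite /invmx Lunit !mxE; apply: cvgM.
  by apply: cvgV; [rewrite -unitfE -unitmxE | exact: cvg_det].
apply: cvgM; first exact: cvg_cst.
apply: cvg_det => k l; under eq_cvg do rewrite !mxE; rewrite !mxE; exact: ML.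
Unshelve. all: by end_near.
Qed.

End MatrixLimits.

Section Kronecker.
Context {R : pzRingType} {n : nat} (F : 'I_n -> R).

Lemma sum_idmx_mul i : \sum_j (1%:M : 'M[R]_n) i j * F j = F i.
Proof.
rewrite (big_only1 i) // ?mxE ?eqxx ?mul1r // => j ji _.
by rewrite mxE eq_sym (negbTE ji) mul0r.
Qed.

Lemma sum_mul_idmx i : \sum_j F j * (1%:M : 'M[R]_n) j i = F i.
Proof.
rewrite (big_only1 i) // ?mxE ?eqxx ?mulr1 // => j ji _.
by rewrite mxE (negbTE ji) mulr0.
Qed.

Lemma sum_mul_idmxT i : \sum_j F j * (1%:M : 'M[R]_n) i j = F i.
Proof.
rewrite (big_only1 i) // ?mxE ?eqxx ?mulr1 // => j ji _.
by rewrite mxE eq_sym (negbTE ji) mulr0.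
Qed.

End Kronecker.

Section DirectionalDerivative.
Context {R : realType} {V : normedModType R}.

Lemma cvg_line (x v : V) : h *: v + x @[h --> (0 : R)^'] --> x.
Proof.
have : h *: v + x @[h --> (0 : R)] --> 0 *: v + x.
  by apply: cvgD; [apply: cvgZr_tmp; exact: cvg_id | exact: cvg_cst].
by move/(continuous_withinNx (fun h : R => h *: v + x) 0).1; rewrite scale0r add0r.
Qed.

Lemma derive_line_cst (f : V -> R) x v :
  (\forall h \near (0 : R)^', f (h *: v + x) = f x) -> 'D_v f x = 0.
Proof.
move=> fcst; apply: cvg_lim => //; apply: cvg_near_cst.
by near=> h; rewrite /= (near fcst h) // subrr scaler0.
Unshelve. all: by end_near.
Qed.

Lemma derive_invmx_id n (M : V -> 'M[R]_n) x v :
  M x = 1%:M -> (\forall y \near x, M y \in unitmx) ->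
  (forall i j, differentiable (fun y => M y i j) x) ->
  forall i j, 'D_v (fun y => invmx (M y) i j) x = - 'D_v (fun y => M y i j) x.
Proof.
move=> Mx1 Munit dM i j.
have scaleE (r s : R) : r *: s = r * s by [].
have M_line k l : M (h *: v + x) k l @[h --> (0 : R)^'] --> M x k l :=
  cvg_comp (fun h : R => h *: v + x) (fun y => M y k l) (cvg_line x v)
    (differentiable_continuous (dM k l)).
have Minv_line k l :
    invmx (M (h *: v + x)) k l @[h --> (0 : R)^'] --> (1%:M : 'M[R]_n) k l.
  rewrite -invmx1 -Mx1; apply: cvg_invmx => [||]; last exact: M_line.
  - by rewrite Mx1 unitmx1.
  - exact: cvg_line Munit.
(* The difference quotient of M^-1 is M^-1 times that of -M, as M^-1 - 1 = M^-1 (1 - M). *)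
pose q h := \sum_k invmx (M (h *: v + x)) i k * - (h^-1 * (M (h *: v + x) k j - M x k j)).
apply: cvg_lim => //; apply: (@cvg_trans _ (q @ (0 : R)^')).
  apply: near_eq_cvg; near=> h.
  have Mh_unit : M (h *: v + x) \in unitmx by near: h; exact: cvg_line Munit.
  rewrite /q /= Mx1 invmx1 scaleE.
  have -> : invmx (M (h *: v + x)) i j - (1%:M : 'M[R]_n) i j
         = (invmx (M (h *: v + x)) *m (1%:M - M (h *: v + x))) i j.
    by rewrite mulmxBr mulmx1 mulVmx // !mxE.
  rewrite mxE mulr_sumr; apply: eq_bigr => k _.
  by rewrite !mxE; ring.
have -> : - 'D_v (fun y => M y i j) x
         = \sum_k (1%:M : 'M[R]_n) i k * - 'D_v (fun y => M y k j) x.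
  by rewrite sum_idmx_mul.
apply: (@cvg_big R _ +%R 0 xpredT) => [|k _]; first exact: add_continuous.
apply: cvgM; first exact: Minv_line.
exact: cvgN (diff_derivable (dM k j)).
Unshelve. all: by end_near.
Qed.

End DirectionalDerivative.

Section Minkowski.
Context {R : realType}.
Local Notation eta := (Defs.eta R).
Implicit Types (E : 'rV[R]_4 -> 'M[R]_4) (x y : 'rV[R]_4).

Lemma eta_neq a b : a != b -> eta a b = 0.
Proof. by rewrite /Defs.eta => /negbTE ->. Qed.

Lemma eta00 : eta ord0 ord0 = 1.
Proof. by rewrite /Defs.eta eqxx. Qed.

Lemma eta_spatial i : i != ord0 -> eta i i = -1.
Proof. by rewrite /Defs.eta eqxx => /negbTE ->. Qed.

Lemma sum_eta_mul a (F : 'I_4 -> R) : \sum_b eta a b * F b = eta a a * F a.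
Proof. by rewrite (big_only1 a) // => b ba _; rewrite eta_neq 1?eq_sym ?mul0r. Qed.

Lemma sum_mul_eta a (F : 'I_4 -> R) : \sum_b F b * eta b a = F a * eta a a.
Proof. by rewrite (big_only1 a) // => b ba _; rewrite eta_neq ?mulr0. Qed.

Lemma cb_time i : i != ord0 -> cb R i 0 ord0 = 0.
Proof. by move=> i0; rewrite /cb mxE eq_sym (negbTE i0) andbF. Qed.

Lemma sum_mul_cb i (F : 'I_4 -> R) : \sum_p F p * cb R i 0 p = F i.
Proof.
rewrite (big_only1 i) // /cb ?mxE ?eqxx ?mulr1 // => p pi _.
by rewrite mxE (negbTE pi) andbF mulr0.
Qed.

Lemma quadratic_cb2 (G : 'I_4 -> 'I_4 -> R) i j :
  \sum_p \sum_q G p q * (cb R i + cb R j) 0 p * (cb R i + cb R j) 0 q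
  = G i i + G i j + G j i + G j j.
Proof.
set v := cb R i + cb R j.
have vE p : v 0 p = cb R i 0 p + cb R j 0 p by rewrite mxE.
rewrite (eq_bigr (fun p => (G p i + G p j) * cb R i 0 p + (G p i + G p j) * cb R j 0 p)).
  by rewrite big_split /= !sum_mul_cb; ring.
move=> p _; rewrite (eq_bigr (fun q => v 0 p * (G p q * cb R i 0 q) + v 0 p * (G p q * cb R j 0 q))).
  by rewrite big_split /= -!mulr_sumr !sum_mul_cb vE; ring.
by move=> q _; rewrite [v 0 q]vE; ring.
Qed.

Lemma sym_quadratic_eq0 (G : 'I_4 -> 'I_4 -> R) :
  (forall p q, G p q = G q p) ->
  (forall v : 'rV[R]_4, v 0 ord0 = 0 -> \sum_p \sum_q G p q * v 0 p * v 0 q = 0) ->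
  forall i j, i != ord0 -> j != ord0 -> G i j = 0.
Proof.
move=> Gsym Q0 i j i0 j0.
have Q2 k l : k != ord0 -> l != ord0 -> G k k + G k l + G l k + G l l = 0.
  by move=> k0 l0; rewrite -quadratic_cb2; apply: Q0; rewrite mxE !cb_time ?addr0.
have := Q2 i i i0 i0; have := Q2 j j j0 j0; have := Q2 i j i0 j0.
rewrite (Gsym j i); lra.
Qed.

Lemma gmet_diag E y m n : gmet E y m n = \sum_a eta a a * (E y a m * E y a n).
Proof.
apply: eq_bigr => a _; rewrite (big_only1 a) //= ?mulrA // => b ba _.
by rewrite eta_neq 1?eq_sym // !mul0r.
Qed.

Lemma gmet_sym E y m n : gmet E y m n = gmet E y n m.
Proof. by rewrite !gmet_diag; apply: eq_bigr => a _; rewrite [E y a n * _]mulrC. Qed.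

Lemma Gam_sym E y k m n : Gam E y k m n = Gam E y k n m.
Proof.
rewrite /Gam; congr (_ * _); apply: eq_bigr => r _.
have -> : (fun z => gmet E z m n) = (fun z => gmet E z n m).
  by apply/funext => z; exact: gmet_sym.
by rewrite [X in X - _]addrC.
Qed.

Lemma derive_gmet_id E x v m n :
  (forall a b, derivable (fun y => E y a b) x v) -> E x = 1%:M ->
  'D_v (fun y => gmet E y m n) x
  = eta n n * 'D_v (fun y => E y n m) x + eta m m * 'D_v (fun y => E y m n) x.
Proof.
move=> dE Ex.
have scaleE (r s : R) : r *: s = r * s by [].
have dEE a : derivable (fun y => E y a m * E y a n) x v := derivableM (dE a m) (dE a n).
have -> : (fun y => gmet E y m n) = \sum_(a < 4) (fun y => eta a a * (E y a m * E y a n)).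
  by apply/funext => y; rewrite gmet_diag fct_sumE.
rewrite derive_sum => [|a]; last exact: derivableM (derivable_cst _ _ _) (dEE a).
rewrite (eq_bigr (fun a => eta a a * 'D_v (fun y => E y a n) x * (1%:M : 'M[R]_4) a m
                       + eta a a * 'D_v (fun y => E y a m) x * (1%:M : 'M[R]_4) a n)).
  by rewrite big_split /= !sum_mul_idmx addrC.
move=> a _.
rewrite (deriveMl (f := fun y => E y a m * E y a n)) //.
by rewrite (deriveM (dE a m) (dE a n)) Ex 2!scaleE; ring.
Qed.

End Minkowski.

Section FlatFrame.
Context {R : realType}.
Local Notation eta := (Defs.eta R).
Implicit Type T : 'I_4 -> 'I_4 -> 'I_4 -> R.

(* The quantities of Defs at a point where e^a_mu = delta^a_mu (so g = eta),
   as functions of the torsion T^a_{mu nu}. *)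
Definition Tuuu_flat T l m n := eta m m * eta n n * T l m n.
Definition Tddd_flat T l m n := eta l l * T l m n.
Definition Tvu_flat T m := eta m m * \sum_(l < 4) T l l m.
Definition Sigma_flat T l m n :=
  4^-1 * (Tuuu_flat T l m n + Tuuu_flat T m l n - Tuuu_flat T n l m)
  + 2^-1 * (eta l n * Tvu_flat T m - eta l m * Tvu_flat T n).
Definition Tscal_flat T :=
  \sum_(l < 4) \sum_(m < 4) \sum_(n < 4) Sigma_flat T l m n * Tddd_flat T l m n.

Variables (a1 a2 a3 w12 w13 w23 : R).

(* d_m e^b_n on the worldline of the proper frame: the acceleration a_i = d_i e^0_0
   and the antisymmetric triad rotation w_ij = d_i e^j_0. *)
Definition fermi_grad (m b n : 'I_4) : R :=
  if n != ord0 then 0 else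
  match nat_of_ord m, nat_of_ord b with
  | 1, 0 => a1 | 2, 0 => a2 | 3, 0 => a3
  | 1, 2 => w12 | 2, 1 => - w12 | 1, 3 => w13 | 3, 1 => - w13
  | 2, 3 => w23 | 3, 2 => - w23
  | _, _ => 0
  end.

Definition fermi_torsion (b m n : 'I_4) : R := fermi_grad m b n - fermi_grad n b m.

Local Notation T := fermi_torsion.

Ltac flat_compute :=
  rewrite /Tscal_flat /Sigma_flat /Tddd_flat /Tuuu_flat /Tvu_flat /T /fermi_grad
          !big_ord4 /Defs.eta /=; field; rewrite ?pnatr_eq0.

Lemma fermi_Tscal : Tscal_flat T = 0.
Proof. by flat_compute. Qed.

Lemma fermi_superpotential_torsion m a :
  \sum_(l < 4) \sum_(n < 4) Sigma_flat T l n m * (Tddd_flat T l n a * eta a a) = 0.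
Proof. by case: (ord4P m) => ->; case: (ord4P a) => ->; flat_compute. Qed.

Lemma fermi_superpotential_sym a b : Sigma_flat T a ord0 b = Sigma_flat T b ord0 a.
Proof. by case: (ord4P a) => ->; case: (ord4P b) => ->; flat_compute. Qed.

End FlatFrame.

Section IdentityFrame.
Context {R : realType} {E : 'rV[R]_4 -> 'M[R]_4} {x : 'rV[R]_4}.
Hypothesis Ex : E x = 1%:M.
Local Notation eta := (Defs.eta R).
Local Notation T := (torsion E x).

Lemma einv_id : einv E x = 1%:M.
Proof. by rewrite /einv Ex invmx1. Qed.

Lemma ginv_id m n : ginv E x m n = eta m n.
Proof.
rewrite /ginv einv_id.
under eq_bigr => a _ do rewrite (sum_mul_idmxT (fun b => eta a b * 1%:M m a)).
exact: sum_mul_idmxT.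
Qed.

Lemma gmet_id m n : gmet E x m n = eta m n.
Proof.
rewrite /gmet Ex.
under eq_bigr => a _ do rewrite (sum_mul_idmx (fun b => eta a b * 1%:M a m)).
by rewrite sum_mul_idmx /Defs.eta eq_sym.
Qed.

Lemma Tudd_id l m n : Tudd E x l m n = T l m n.
Proof. by rewrite /Tudd einv_id sum_idmx_mul. Qed.

Lemma Tuuu_id l m n : Tuuu E x l m n = Tuuu_flat T l m n.
Proof.
rewrite /Tuuu /Tuuu_flat (eq_bigr (fun p => eta m p * (eta n n * T l p n))) => [|p _].
  by rewrite sum_eta_mul mulrA.
rewrite -(sum_eta_mul n (T l p)) mulr_sumr; apply: eq_bigr => q _.
by rewrite !ginv_id Tudd_id mulrA.
Qed.

Lemma Tvu_id m : Tvu E x m = Tvu_flat T m.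
Proof.
rewrite /Tvu /Tvu_flat (eq_bigr (fun n => eta m n * Tvd E x n)) => [|n _].
  by rewrite sum_eta_mul; congr (_ * _); apply: eq_bigr => l _; rewrite Tudd_id.
by rewrite ginv_id.
Qed.

Lemma Sigma_id l m n : Sigma E x l m n = Sigma_flat T l m n.
Proof. by rewrite /Sigma /Sigma_flat !Tuuu_id !Tvu_id !ginv_id. Qed.

Lemma Tddd_id l m n : Tddd E x l m n = Tddd_flat T l m n.
Proof.
rewrite /Tddd /Tddd_flat (eq_bigr (fun p => eta l p * T p m n)) ?sum_eta_mul // => p _.
by rewrite gmet_id Tudd_id.
Qed.

Lemma Tddu_frame_id l n a : Tddu_frame E x l n a = Tddd_flat T l n a * eta a a.
Proof.
rewrite /Tddu_frame Ex (eq_bigr (fun r => Tddd E x l n r * eta r a)) => [|r _].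
  by rewrite sum_mul_eta Tddd_id.
by rewrite (sum_mul_idmxT (fun s => Tddd E x l n r * ginv E x r s)) ginv_id.
Qed.

Lemma Tscal_id : Tscal E x = Tscal_flat T.
Proof.
apply: eq_bigr => l _; apply: eq_bigr => m _; apply: eq_bigr => n _.
by rewrite Sigma_id Tddd_id.
Qed.

Lemma Sigma_fcf_id a m b : Sigma_fcf E x a m b = Sigma_flat T a m b.
Proof.
rewrite /Sigma_fcf Ex (eq_bigr (fun l => 1%:M a l * Sigma E x l m b)) => [|l _].
  by rewrite sum_idmx_mul Sigma_id.
rewrite -(sum_idmx_mul (Sigma E x l m) b) mulr_sumr.
by apply: eq_bigr => n _; rewrite mulrA.
Qed.

Lemma tdens_id m a :
  tdens E x m a = kconst R * (4 * (\sum_(l < 4) \sum_(n < 4)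
      Sigma_flat T l n m * (Tddd_flat T l n a * eta a a)) - eup E x a m * Tscal_flat T).
Proof.
rewrite /tdens Tscal_id; congr (_ * (4 * _ - _)).
by apply: eq_bigr => l _; apply: eq_bigr => n _; rewrite Sigma_id Tddu_frame_id.
Qed.

Lemma Mdens_id a b :
  Mdens E x a b = - 4 * kconst R * (Sigma_flat T a ord0 b - Sigma_flat T b ord0 a).
Proof. by rewrite /Mdens !Sigma_fcf_id Ex det1 mulr1. Qed.

End IdentityFrame.

Definition dtetrad {R : realType} (E : 'rV[R]_4 -> 'M[R]_4) x (m a n : 'I_4) : R :=
  pd m (fun y => E y a n) x.

Lemma torsion_dtetrad {R : realType} (E : 'rV[R]_4 -> 'M[R]_4) x a m n :
  torsion E x a m n = dtetrad E x m a n - dtetrad E x n a m.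
Proof. by []. Qed.

Section ProperFrame.
Context {R : realType} {U : set 'rV[R]_4} {E : 'rV[R]_4 -> 'M[R]_4}.
Hypothesis U_open : open U.
Hypothesis E_diff : forall x, U x -> forall (a m : 'I_4), differentiable (fun y => E y a m) x.
Hypothesis E_unit : forall x, U x -> E x \in unitmx.
Hypothesis E_worldline : forall tau, U (worldline tau) -> E (worldline tau) = 1%:M.
Hypothesis geodesic : forall tau (n : 'rV[R]_4) s, n 0 ord0 = 0 ->
  (forall u, 0 <= u <= 1 -> U (worldline tau + (u * s) *: n)) ->
  forall mu : 'I_4,
  \sum_(p < 4) \sum_(q < 4) Gam E (worldline tau + s *: n) mu p q * n 0 p * n 0 q = 0.
Hypothesis transport : forall tau (n : 'rV[R]_4) s, n 0 ord0 = 0 ->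
  (forall u, 0 <= u <= 1 -> U (worldline tau + (u * s) *: n)) ->
  forall (mu a : 'I_4),
  'D_n (fun y => einv E y mu a) (worldline tau + s *: n)
  + \sum_(p < 4) \sum_(q < 4)
      Gam E (worldline tau + s *: n) mu p q * n 0 p * einv E (worldline tau + s *: n) q a
  = 0.
Context {tau : R}.
Hypothesis U_tau : U (worldline tau).

Local Notation eta := (Defs.eta R).
Local Notation x := (worldline tau).
Local Notation d := (dtetrad E x).

Let E_x : E x = 1%:M := E_worldline tau U_tau.

Let U_near : \forall y \near x, U y.
Proof. exact: open_nbhs_nbhs. Qed.

(* The geodesic and transport hypotheses are only needed at s = 0. *)
Let at_gamma (n : 'rV[R]_4) u : 0 <= u <= 1 -> U (x + (u * 0) *: n).
Proof. by rewrite mulr0 scale0r addr0. Qed.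

Lemma dtetrad_time a n : d ord0 a n = 0.
Proof.
have U_line : \forall h \near (0 : R)^', U (h *: cb R ord0 + x).
  exact: cvg_line U_near.
apply: derive_line_cst; apply: filterS U_line => h Uh.
have x_shift : h *: cb R ord0 + x = worldline (h + tau) by rewrite /worldline scalerDl.
by rewrite /= x_shift !E_worldline // -x_shift.
Qed.

Lemma pd_gmet_worldline k m n :
  pd k (fun y => gmet E y m n) x = eta n n * d k n m + eta m m * d k m n.
Proof. by apply: derive_gmet_id E_x => a b; exact/diff_derivable/E_diff. Qed.

Lemma Gam_worldline mu p q : Gam E x mu p q = 2^-1 * eta mu mu *
  (pd p (fun y => gmet E y mu q) x + pd q (fun y => gmet E y mu p) x
   - pd mu (fun y => gmet E y p q) x).
Proof.
rewrite /Gam -mulrA; congr (_ * _).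
by under eq_bigr do rewrite ginv_id //; rewrite sum_eta_mul.
Qed.

Lemma Gam_spatial mu i j : i != ord0 -> j != ord0 -> Gam E x mu i j = 0.
Proof.
apply: sym_quadratic_eq0 => [p q|v v0]; first exact: Gam_sym.
by have := geodesic tau v 0 v0 (at_gamma v) mu; rewrite scale0r addr0.
Qed.

Lemma dtetrad_spatial_Gam i mu a : i != ord0 -> d i mu a = Gam E x mu i a.
Proof.
move=> i0; have := transport tau (cb R i) 0 (cb_time i i0) (at_gamma _) mu a.
rewrite scale0r addr0 einv_id // derive_invmx_id //; last 2 first.
- exact: filterS E_unit U_near.
- exact: E_diff.
under eq_bigr => p _ do rewrite (sum_mul_idmx (fun q => Gam E x mu p q * cb R i 0 p)).
by rewrite sum_mul_cb => /eqP; rewrite addrC subr_eq0 => /eqP.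
Qed.

Lemma dtetrad_spatial i mu j : i != ord0 -> j != ord0 -> d i mu j = 0.
Proof. by move=> i0 j0; rewrite dtetrad_spatial_Gam // Gam_spatial. Qed.

(* On the worldline Gamma^j_{i0} = (d_i e^j_0 - d_j e^i_0) / 2, while transport
   gives d_i e^j_0 = Gamma^j_{i0}. *)
Lemma dtetrad_rot_antisym i j :
  i != ord0 -> j != ord0 -> d i j ord0 = - d j i ord0.
Proof.
move=> i0 j0; have := dtetrad_spatial_Gam i j ord0 i0.
rewrite Gam_worldline !pd_gmet_worldline !dtetrad_time.
rewrite (dtetrad_spatial i ord0 j i0 j0) (dtetrad_spatial j ord0 i j0 i0).
rewrite eta00 !eta_spatial //.
lra.
Qed.

Lemma dtetrad_fermi m a n :
  d m a n = fermi_grad (d i1 ord0 ord0) (d i2 ord0 ord0) (d i3 ord0 ord0)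
                       (d i1 i2 ord0) (d i1 i3 ord0) (d i2 i3 ord0) m a n.
Proof.
rewrite /fermi_grad; have [n0|n_spatial] := eqVneq n ord0; last first.
  by have [->|m0] := eqVneq m ord0;
    [exact: dtetrad_time | exact: dtetrad_spatial].
rewrite n0 /=; have [->|m0] := eqVneq m ord0; first by rewrite dtetrad_time.
have rot_diag k : k != ord0 -> d k k ord0 = 0.
  by move=> k0; have := dtetrad_rot_antisym k k k0 k0; lra.
case: (ord4P m) m0 => -> // _; case: (ord4P a) => -> /=;
  match goal with
  | |- ?t = ?t => reflexivity
  | |- _ = 0 => exact: rot_diag
  | |- _ = - _ => exact: dtetrad_rot_antisym
  end.
Qed.

Lemma torsion_worldline :
  torsion E x = fermi_torsion (d i1 ord0 ord0) (d i2 ord0 ord0) (d i3 ord0 ord0)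
                              (d i1 i2 ord0) (d i1 i3 ord0) (d i2 i3 ord0).
Proof.
do 3!apply/funext => ?.
by rewrite torsion_dtetrad /fermi_torsion; congr (_ - _); exact: dtetrad_fermi.
Qed.

End ProperFrame.

Theorem mainTheorem2 (R : realType) (U : set 'rV[R]_4) (E : 'rV[R]_4 -> 'M[R]_4) :
  (* chart domain: an open set of proper (Fermi-type) coordinates *)
  open U ->
  (* the tetrad is a differentiable, invertible field on U *)
  (forall x, U x -> forall (a m : 'I_4), differentiable (fun y => E y a m) x) ->
  (forall x, U x -> E x \in unitmx) ->
  (* along gamma : tau |-> (tau,0,0,0), e_a = d_a (e_(0) = 4-velocity, e_(i) = triad) *)
  (forall tau, U (worldline tau) -> E (worldline tau) = 1%:M) ->
  (* the spatial coordinate lines s |-> (tau, s n) are affinely parametrized geodesics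
     orthogonal to gamma ... *)
  (forall tau (n : 'rV[R]_4) s, n 0 ord0 = 0 ->
     (forall u, 0 <= u <= 1 -> U (worldline tau + (u * s) *: n)) ->
     forall mu : 'I_4,
     \sum_(p < 4) \sum_(q < 4) Gam E (worldline tau + s *: n) mu p q * n 0 p * n 0 q = 0) ->
  (* ... along which the frame e_a is parallel transported (Levi-Civita) *)
  (forall tau (n : 'rV[R]_4) s, n 0 ord0 = 0 ->
     (forall u, 0 <= u <= 1 -> U (worldline tau + (u * s) *: n)) ->
     forall (mu a : 'I_4),
     'D_n (fun y => einv E y mu a) (worldline tau + s *: n)
     + \sum_(p < 4) \sum_(q < 4)
         Gam E (worldline tau + s *: n) mu p q * n 0 p * einv E (worldline tau + s *: n) q a
     = 0) ->
  forall tau, U (worldline tau) ->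
    (forall (mu a : 'I_4), tdens E (worldline tau) mu a = 0) /\
    (forall (a b : 'I_4), Mdens E (worldline tau) a b = 0).
Proof.
move=> U_open E_diff E_unit E_worldline geodesic transport tau U_tau.
have E_x := E_worldline tau U_tau.
have T_fermi := torsion_worldline U_open E_diff E_unit E_worldline geodesic transport U_tau.
split=> [m a | a b].
- by rewrite (tdens_id E_x) T_fermi fermi_Tscal fermi_superpotential_torsion !mulr0 subr0 mulr0.
- by rewrite (Mdens_id E_x) T_fermi fermi_superpotential_sym subrr mulr0.
Qed.
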